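(* Let $D$ be an integral domain, $R=R(D)$, and let $f,g\in D\setminus\{0\}$. The following are equivalent: (1) $\mathfrak p_g\subseteq\mathfrak p_f$; (2) $\sqrt{(\frac1g)R}\subseteq\sqrt{(\frac1f)R}$; (3) there exists $e\ge1$ such that $\frac1{g^e}\in(\frac1f)R$ (equivalently, $\frac f{g^e}\in R$).
   Context: For an integral domain $D$ with fraction field $F$, the reciprocal complement $R(D)$ is the subring of $F$ generated by all $1/d$, $d\in D\setminus\{0\}$. For nonzero $f\in D$, $\mathfrak p_f$ denotes the unique prime ideal of $R(D)$ maximal with respect to not containing $1/f$. $\sqrt I$ denotes the radical of an ideal $I$. *)

From HB Require Import structures.
From mathcomp Require Import all_boot all_algebra fraction.
From Stdlib Require Import ClassicalEpsilon.
Set Implicit Arguments. Unset Strict Implicit. Unset Printing Implicit Defensive.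
Import GRing.Theory.
Local Open Scope ring_scope.

Definition frac_emb (D : idomainType) (d : D) : {fraction D} := @FracField.tofrac D d.

Definition is_subring (F : fieldType) (S : F -> Prop) : Prop :=
  [/\ S 0, S 1, (forall x y, S x -> S y -> S (x - y))
    & (forall x y, S x -> S y -> S (x * y))].

(* R(D): the subring of F generated by all 1/d, d in D \ {0}
   (intersection of all subrings of F containing them). *)
Definition recip_compl (D : idomainType) : {fraction D} -> Prop :=
  fun x => forall S : {fraction D} -> Prop, is_subring S ->
    (forall d : D, d != 0 -> S (frac_emb d)^-1) -> S x.

Definition is_ideal (F : fieldType) (R I : F -> Prop) : Prop :=
  [/\ (forall x, I x -> R x), I 0, (forall x y, I x -> I y -> I (x + y))
    & (forall r x, R r -> I x -> I (r * x))].

Definition is_prime_ideal (F : fieldType) (R P : F -> Prop) : Prop :=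
  [/\ is_ideal R P, ~ P 1
    & (forall a b, R a -> R b -> P (a * b) -> P a \/ P b)].

Definition max_prime_avoiding (F : fieldType) (R : F -> Prop) (a : F)
  (P : F -> Prop) : Prop :=
  [/\ is_prime_ideal R P, ~ P a &
    forall Q, is_prime_ideal R Q -> ~ Q a -> (forall x, P x -> Q x) ->
      forall x, Q x -> P x].

(* p_f : the (unique, by the paper) prime ideal of R(D) maximal w.r.t. not
   containing 1/f, selected by Hilbert's epsilon. *)
Definition p_ideal (D : idomainType) (f : D) : {fraction D} -> Prop :=
  epsilon (inhabits (fun _ => False))
    (max_prime_avoiding (@recip_compl D) (frac_emb f)^-1).

Definition principal_ideal (F : fieldType) (R : F -> Prop) (a : F) : F -> Prop :=
  fun x => exists r, R r /\ x = a * r.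

Definition radical (F : fieldType) (R I : F -> Prop) : F -> Prop :=
  fun x => R x /\ exists n : nat, (0 < n)%N /\ I (x ^+ n).

(* For a subring A of a field, R(A) (the sums of reciprocals of nonzero
   elements of A) is local: if a in A is not in R(A), then 1/a lies in every
   maximal ideal, and the remaining part of a sum of reciprocals is 0 or a unit.
   Applied to A = D[1/f], whose reciprocal complement is R(D)[f], locality makes
   the elements of R(D) dividing no power of 1/f an ideal; it is then the largest
   prime avoiding 1/f, i.e. p_f.  With this description of p_f, both inclusions
   p_g <= p_f and sqrt((1/g)R) <= sqrt((1/f)R) unfold to: some power of 1/g
   lies in (1/f)R. *)

From mathcomp Require Import all_boot all_algebra fraction.
From mathcomp Require Import boolp classical_sets.
From mathcomp Require Import ring.
From Stdlib Require Import ClassicalEpsilon.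
Set Implicit Arguments. Unset Strict Implicit. Unset Printing Implicit Defensive.
Import GRing.Theory.
Local Open Scope ring_scope.

Definition unit_in (F : fieldType) (R : F -> Prop) (x : F) : Prop :=
  exists2 y, R y & x * y = 1.

Definition is_local (F : fieldType) (R : F -> Prop) : Prop :=
  forall x, R x -> unit_in R x \/ unit_in R (1 - x).

Definition is_maximal_ideal (F : fieldType) (R M : F -> Prop) : Prop :=
  [/\ is_ideal R M, ~ M 1 &
    forall w, R w -> ~ M w -> exists m r, [/\ M m, R r & m + w * r = 1]].

Definition divides_pow (F : fieldType) (R : F -> Prop) (u x : F) : Prop :=
  exists y k, R y /\ x * y = u ^+ k.

Definition nondivisors_pow (F : fieldType) (R : F -> Prop) (u x : F) : Prop :=
  R x /\ ~ divides_pow R u x.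

Definition adjoin_pow (F : fieldType) (R : F -> Prop) (a x : F) : Prop :=
  exists r m, R r /\ x = r * a ^+ m.

Lemma local_unitD (F : fieldType) (L : F -> Prop) x x' : is_subring L -> is_local L ->
  L x -> L x' -> unit_in L (x + x') -> unit_in L x \/ unit_in L x'.
Proof.
case=> _ _ _ LM locL Lx Lx' [z Lz xz1].
have [[y Ly E]|[y Ly E]] := locL _ (LM _ _ Lx Lz).
  by left; exists (z * y); [exact: LM | rewrite mulrA].
right; exists (z * y); first exact: LM.
by rewrite -E -[in RHS]xz1; ring.
Qed.

Section SubringTheory.
Variables (F : fieldType) (R : F -> Prop).
Hypothesis subR : is_subring R.

Lemma subring0 : R 0. Proof. by case: subR. Qed.
Lemma subring1 : R 1. Proof. by case: subR. Qed.
Lemma subringB x y : R x -> R y -> R (x - y). Proof. by case: subR => _ _ + _; apply. Qed.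
Lemma subringM x y : R x -> R y -> R (x * y). Proof. by case: subR => _ _ _; apply. Qed.
Lemma subringN x : R x -> R (- x).
Proof. by move=> Rx; rewrite -sub0r; apply: subringB => //; exact: subring0. Qed.
Lemma subringD x y : R x -> R y -> R (x + y).
Proof. by move=> Rx Ry; rewrite -[y]opprK; apply: subringB => //; exact: subringN. Qed.
Lemma subringX x n : R x -> R (x ^+ n).
Proof.
move=> Rx; elim: n => [|n IHn]; first by rewrite expr0; exact: subring1.
by rewrite exprS; exact: subringM.
Qed.

Lemma ideal_sum_principal (I : F -> Prop) w : is_ideal R I -> R w ->
  is_ideal R (fun x => exists m r, [/\ I m, R r & x = m + w * r]).
Proof.
case=> IR I0 ID IM Rw; split.
- by move=> _ [m [r [Im Rr ->]]]; apply: subringD; [exact: IR | exact: subringM].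
- by exists 0, 0; split => //; [exact: subring0 | rewrite mulr0 addr0].
- move=> _ _ [m [r [Im Rr ->]]] [m' [r' [Im' Rr' ->]]].
  by exists (m + m'), (r + r'); split; [exact: ID | exact: subringD | ring].
- move=> s _ Rs [m [r [Im Rr ->]]].
  by exists (s * m), (s * r); split; [exact: IM | exact: subringM | ring].
Qed.

Lemma principal_ideal_ideal z : R z -> is_ideal R (principal_ideal R z).
Proof.
move=> Rz; split.
- by move=> _ [r [Rr ->]]; exact: subringM.
- by exists 0; split; [exact: subring0 | rewrite mulr0].
- move=> _ _ [r [Rr ->]] [r' [Rr' ->]].
  by exists (r + r'); split; [exact: subringD | rewrite mulrDr].
- by move=> s _ Rs [r [Rr ->]]; exists (s * r); split; [exact: subringM | rewrite mulrCA].
Qed.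

Lemma bigcup_proper_ideal (C : set (set F)) :
  total_on C subset -> (forall X, C X -> (X !=set0)%classic -> is_ideal R X /\ ~ X 1) ->
  ((\bigcup_(X in C) X) !=set0)%classic ->
  is_ideal R (\bigcup_(X in C) X)%classic /\ ~ (\bigcup_(X in C) X)%classic 1.
Proof.
move=> Ctot CI [x0 [X0 CX0 X0x0]].
have {}CI X x : C X -> X x -> is_ideal R X /\ ~ X 1 by move=> CX Xx; apply: CI => //; exists x.
split; last by move=> [X CX X1]; have [_] := CI _ _ CX X1.
split.
- by move=> x [X CX Xx]; have [[XR _ _ _] _] := CI _ _ CX Xx; exact: XR.
- by exists X0 => //; have [[]] := CI _ _ CX0 X0x0.
- move=> x y [X1 CX1 X1x] [X2 CX2 X2y].
  have [X12|X21] := Ctot _ _ CX1 CX2.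
  + by exists X2 => //; have [[_ _ XD _] _] := CI _ _ CX2 X2y; apply: XD => //; exact: X12.
  + by exists X1 => //; have [[_ _ XD _] _] := CI _ _ CX1 X1x; apply: XD => //; exact: X21.
- by move=> r x Rr [X CX Xx]; exists X => //; have [[_ _ _ XM] _] := CI _ _ CX Xx; exact: XM.
Qed.

Lemma exists_maximal_ideal z : R z -> ~ unit_in R z ->
  exists2 M, is_maximal_ideal R M & M z.
Proof.
move=> Rz nuz.
(* [P] admits [set0] because [Zorn_bigcup] also needs the union of the empty chain. *)
pose P (X : set F) := (X !=set0)%classic -> [/\ is_ideal R X, ~ X 1 & X z].
have [|M [PM maxM]] := @Zorn_bigcup _ P.
  move=> C CP Ctot [x [X CX Xx]].
  have [_ _ Xz] := CP X CX (ex_intro _ x Xx).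
  have CI Y : C Y -> (Y !=set0)%classic -> is_ideal R Y /\ ~ Y 1.
    by move=> CY /(CP Y CY) [].
  have [] := bigcup_proper_ideal Ctot CI; first by exists x, X.
  by split => //; exists X.
have zRz : principal_ideal R z z by exists 1; split; [exact: subring1 | rewrite mulr1].
have PzR : P (principal_ideal R z).
  move=> _; split => //; first exact: principal_ideal_ideal.
  by move=> [r [Rr /esym zr1]]; apply: nuz; exists r.
have [Mideal M1 Mz] : [/\ is_ideal R M, ~ M 1 & M z].
  apply: PM; apply: contrapT => M_empty; apply: (maxM _ _ PzR); split.
    by move=> x Mx; case: M_empty; exists x.
  by move=> /(_ z zRz) Mz; apply: M_empty; exists z.
exists M => //; split => // w Rw nMw; apply: contrapT => nJ1.
pose J x := exists m r, [/\ M m, R r & x = m + w * r].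
apply: (maxM J).
  split; first by move=> x Mx; exists x, 0; split => //; [exact: subring0 | rewrite mulr0 addr0].
  move=> /(_ w) JM; apply: nMw; apply: JM.
  by exists 0, 1; split => //; [case: Mideal | exact: subring1 | rewrite mulr1 add0r].
move=> _; split; first exact: ideal_sum_principal.
  by move=> [m [r [Mm Rr E]]]; apply: nJ1; exists m, r; split.
by exists z, 0; split => //; [exact: subring0 | rewrite mulr0 addr0].
Qed.

Lemma maximal_ideal_prime M u v : is_maximal_ideal R M ->
  R u -> R v -> M (u * v) -> M u \/ M v.
Proof.
case=> [[_ _ MD MM] _ Mmax] Ru Rv Muv.
have [Mu|nMu] := pselect (M u); [by left | right].
have [m [r [Mm Rr E]]] := Mmax u Ru nMu.
have -> : v = v * m + r * (u * v) by rewrite -[v in LHS]mulr1 -E; ring.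
by apply: MD; apply: MM.
Qed.

Lemma radical_principal_subset u v : R u -> R v ->
  (forall x, radical R (principal_ideal R v) x -> radical R (principal_ideal R u) x) <->
  (exists e, (1 <= e)%N /\ principal_ideal R u (v ^+ e)).
Proof.
move=> Ru Rv; split.
  move=> sub_vu.
  have rad_v : radical R (principal_ideal R v) v.
    split => //; exists 1%N; split => //; exists 1.
    by split; [exact: subring1 | rewrite expr1 mulr1].
  by have [_ [e ?]] := sub_vu v rad_v; exists e.
move=> [e [e1 [r [Rr Er]]]] x [Rx [n [n0 [r' [Rr' Er']]]]]; split => //.
exists (n * e)%N; split; first by rewrite muln_gt0 n0.
exists (r * r' ^+ e); split; first by apply: subringM => //; exact: subringX.
by rewrite exprM Er' exprMn Er mulrA.
Qed.

Lemma nondivisors_pow_subset u v : R u -> R v ->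
  (forall x, nondivisors_pow R v x -> nondivisors_pow R u x) <->
  (exists e, (1 <= e)%N /\ principal_ideal R u (v ^+ e)).
Proof.
move=> Ru Rv; split.
  move=> sub_vu.
  have [y [k [Ry E]]] : divides_pow R v u.
    apply: contrapT => nvu; have [_ []] := sub_vu u (conj Ru nvu).
    by exists 1, 1%N; split; [exact: subring1 | rewrite mulr1 expr1].
  case: k E => [|k] E; last by exists k.+1; split => //; exists y; split.
  exists 1%N; split => //; exists (y * v); split; first exact: subringM.
  by rewrite mulrA E expr0 mul1r expr1.
move=> [e [e1 [r [Rr Er]]]] x [Rx nvx]; split => // -[y [k [Ry E]]]; apply: nvx.
exists (y * r ^+ k), (e * k)%N; split; first by apply: subringM => //; exact: subringX.
by rewrite mulrA E -exprMn -Er -exprM.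
Qed.

Lemma prime_avoiding_sub_nondivisors_pow (Q : F -> Prop) u : R u ->
  is_prime_ideal R Q -> ~ Q u -> forall x, Q x -> nondivisors_pow R u x.
Proof.
move=> Ru [[QR _ _ QM] nQ1 Qprime] nQu x Qx; split; first exact: QR.
move=> [y [k [Ry E]]].
have : Q (u ^+ k) by rewrite -E mulrC; exact: QM.
elim: k {E} => [|k IHk]; first by rewrite expr0.
by rewrite exprS => /Qprime [] //; exact: subringX.
Qed.

Section InvertedPower.
Variable a : F.
Hypotheses (a_neq0 : a != 0) (Ra_inv : R a^-1).

Lemma adjoin_pow_subring : is_subring (adjoin_pow R a).
Proof.
split.
- by exists 0, 0%N; split; [exact: subring0 | rewrite mul0r].
- by exists 1, 0%N; split; [exact: subring1 | rewrite mulr1].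
- move=> _ _ [r [m [Rr ->]]] [s [n [Rs ->]]].
  exists (r * a^-1 ^+ n - s * a^-1 ^+ m), (m + n)%N; split.
    by apply: subringB; apply: subringM => //; exact: subringX.
  by rewrite !exprVn exprD; field; rewrite !expf_neq0.
- move=> _ _ [r [m [Rr ->]]] [s [n [Rs ->]]].
  by exists (r * s), (m + n)%N; split; [exact: subringM | rewrite exprD; ring].
Qed.

Lemma divides_pow_unit_adjoin x : R x ->
  divides_pow R a^-1 x <-> unit_in (adjoin_pow R a) x.
Proof.
move=> Rx; split.
  move=> [y [k [Ry E]]]; exists (y * a ^+ k); first by exists y, k.
  by rewrite mulrA E exprVn mulVf // expf_neq0.
move=> [_ [r [m [Rr ->]]] E]; exists r, m; split => //.
by rewrite exprVn -[r](mulfK (expf_neq0 m a_neq0)) mulrA E mul1r.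
Qed.

Hypothesis local_adjoin : is_local (adjoin_pow R a).

Lemma nondivisors_powD x x' : nondivisors_pow R a^-1 x -> nondivisors_pow R a^-1 x' ->
  nondivisors_pow R a^-1 (x + x').
Proof.
have Radj y : R y -> adjoin_pow R a y by move=> Ry; exists y, 0%N; rewrite mulr1.
move=> [Rx nx] [Rx' nx']; split; first exact: subringD.
move=> /(divides_pow_unit_adjoin (subringD Rx Rx')).
case/(local_unitD adjoin_pow_subring local_adjoin (Radj _ Rx) (Radj _ Rx')).
  by move/(divides_pow_unit_adjoin Rx).
by move/(divides_pow_unit_adjoin Rx').
Qed.

Lemma nondivisors_pow_prime : is_prime_ideal R (nondivisors_pow R a^-1).
Proof.
have powa_neq0 k : a^-1 ^+ k != 0 by rewrite expf_neq0 // invr_neq0.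
split; first split.
- by move=> x [].
- split; first exact: subring0.
  by move=> [y [k [_ E]]]; move: (powa_neq0 k); rewrite -E mul0r eqxx.
- by move=> x x'; exact: nondivisors_powD.
- move=> r x Rr [Rx nx]; split; first exact: subringM.
  move=> [y [k [Ry E]]]; apply: nx; exists (r * y), k; split; first exact: subringM.
  by rewrite -E; ring.
- by move=> [_ []]; exists 1, 0%N; split; [exact: subring1 | rewrite mulr1 expr0].
- move=> x y Rx Ry [_ nxy].
  have [Px|nPx] := pselect (nondivisors_pow R a^-1 x); first by left.
  have [Py|nPy] := pselect (nondivisors_pow R a^-1 y); first by right.
  have [u [k [Ru Eu]]] : divides_pow R a^-1 x by apply: contrapT => nx; apply: nPx.
  have [v [l [Rv Ev]]] : divides_pow R a^-1 y by apply: contrapT => ny; apply: nPy.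
  exfalso; apply: nxy; exists (u * v), (k + l)%N; split; first exact: subringM.
  by rewrite exprD -Eu -Ev; ring.
Qed.

Lemma nondivisors_pow_max_prime_avoiding :
  max_prime_avoiding R a^-1 (nondivisors_pow R a^-1).
Proof.
split; first exact: nondivisors_pow_prime.
  by move=> [_ []]; exists 1, 1%N; split; [exact: subring1 | rewrite mulr1 expr1].
by move=> Q Qprime nQa _; exact: prime_avoiding_sub_nondivisors_pow.
Qed.

Lemma max_prime_avoiding_nondivisors_pow (Q : F -> Prop) :
  max_prime_avoiding R a^-1 Q -> forall x, Q x <-> nondivisors_pow R a^-1 x.
Proof.
have [Pprime nPa _] := nondivisors_pow_max_prime_avoiding.
move=> [Qprime nQa Qmax] x; split; first exact: prime_avoiding_sub_nondivisors_pow.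
by move=> Px; apply: (Qmax _ Pprime nPa _ x Px) => y; exact: prime_avoiding_sub_nondivisors_pow.
Qed.

End InvertedPower.
End SubringTheory.

Definition recip_sums (F : fieldType) (A : F -> Prop) (x : F) : Prop :=
  exists s : seq F, (forall a, a \in s -> A a /\ a != 0) /\ x = \sum_(a <- s) a^-1.

Definition is_semiring_closed (F : fieldType) (B : F -> Prop) : Prop :=
  [/\ B 0, B 1, (forall x y, B x -> B y -> B (x + y))
    & (forall x y, B x -> B y -> B (x * y))].

Section RecipSums.
Variables (F : fieldType) (A : F -> Prop).

Lemma recip_sums0 : recip_sums A 0.
Proof. by exists [::]; split => //; rewrite big_nil. Qed.

Lemma recip_sums_inv a : A a -> a != 0 -> recip_sums A a^-1.
Proof.
move=> Aa a0; exists [:: a]; split; last by rewrite big_seq1.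
by move=> b; rewrite inE => /eqP ->.
Qed.

Lemma recip_sumsD x y : recip_sums A x -> recip_sums A y -> recip_sums A (x + y).
Proof.
move=> [s [As ->]] [t [At ->]]; exists (s ++ t); split; last by rewrite big_cat.
by move=> a; rewrite mem_cat => /orP[/As|/At].
Qed.

Lemma recip_sums_mono (A' : F -> Prop) x : (forall a, A a -> A' a) ->
  recip_sums A x -> recip_sums A' x.
Proof. by move=> AA' [s [As ->]]; exists s; split => // a /As [/AA']. Qed.

Lemma sum_inv_fraction (B : F -> Prop) (s : seq F) : is_semiring_closed B ->
  (forall b, b \in s -> B b /\ b != 0) ->
  exists q p, [/\ B q, B p, p != 0 & \sum_(b <- s) b^-1 = q / p].
Proof.
case=> B0 B1 BD BM; elim: s => [|b s IHs] Bs.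
  by exists 0, 1; split => //; [exact: oner_neq0 | rewrite big_nil mul0r].
have [Bb b0] : B b /\ b != 0 by apply: Bs; rewrite inE eqxx.
have [q [p [Bq Bp p0 E]]] : exists q p, [/\ B q, B p, p != 0 & \sum_(a <- s) a^-1 = q / p].
  by apply: IHs => c cs; apply: Bs; rewrite inE cs orbT.
exists (p + b * q), (b * p); split; [by apply: BD => //; apply: BM | exact: BM | exact: mulf_neq0 |].
by rewrite big_cons E; field; apply/andP.
Qed.

Hypothesis subA : is_subring A.

Lemma recip_sumsM x y : recip_sums A x -> recip_sums A y -> recip_sums A (x * y).
Proof.
move=> [s [As ->]] [t [At ->]]; elim: s As => [|a s IHs] As.
  by rewrite big_nil mul0r; exact: recip_sums0.
have [Aa a0] : A a /\ a != 0 by apply: As; rewrite inE eqxx.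
rewrite big_cons mulrDl; apply: recip_sumsD; last by apply: IHs => b bs; apply: As; rewrite inE bs orbT.
exists [seq a * b | b <- t]; split.
  by move=> _ /mapP [b /At [Ab b0] ->]; split; [exact: (subringM subA) | exact: mulf_neq0].
by rewrite big_map mulr_sumr; apply: eq_bigr => b _; rewrite invfM mulrC.
Qed.

Lemma recip_sums_subring : is_subring (recip_sums A).
Proof.
split.
- exact: recip_sums0.
- by rewrite -invr1; apply: recip_sums_inv; [exact: (subring1 subA) | exact: oner_neq0].
- move=> x _ Rx [s [As ->]]; apply: recip_sumsD => //.
  exists [seq - a | a <- s]; split.
    by move=> _ /mapP [a /As [Aa a0] ->]; split; [exact: (subringN subA) | rewrite oppr_eq0].
  by rewrite big_map -sumrN; apply: eq_bigr => a _; rewrite invrN.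
- exact: recip_sumsM.
Qed.

Let subRA := recip_sums_subring.

Section MaximalIdeal.
Variable M : F -> Prop.
Hypothesis maxM : is_maximal_ideal (recip_sums A) M.

Definition inv_outside (b : F) : Prop := A b /\ (b = 0 \/ ~ M b^-1).

Lemma inv_outside_semiring_closed : is_semiring_closed inv_outside.
Proof.
have [[_ _ _ MM] _ _] := maxM.
have Mprime := maximal_ideal_prime maxM.
have RAinv b : A b -> b != 0 -> recip_sums A b^-1 by exact: recip_sums_inv.
have outM b c : inv_outside b -> inv_outside c -> inv_outside (b * c).
  move=> [Ab nb] [Ac nc]; split; first exact: (subringM subA).
  have [->|b0] := eqVneq b 0; first by left; rewrite mul0r.
  have [->|c0] := eqVneq c 0; first by left; rewrite mulr0.
  case: nb => [/eqP|nMb]; first by rewrite (negbTE b0).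
  case: nc => [/eqP|nMc]; first by rewrite (negbTE c0).
  by right; rewrite invfM => /Mprime [] //; exact: RAinv.
split => //.
- by split; [exact: (subring0 subA) | left].
- by split; [exact: (subring1 subA) | right; rewrite invr1; case: maxM].
- move=> b c Bb Bc; have [Ab _] := Bb; have [Ac _] := Bc.
  split; first exact: (subringD subA).
  have [->|b0] := eqVneq b 0; first by rewrite add0r; case: Bc.
  have [->|c0] := eqVneq c 0; first by rewrite addr0; case: Bb.
  have [->|bc0] := eqVneq (b + c) 0; first by left.
  right => Mbc; have [_ [/eqP|]] := outM _ _ Bb Bc.
    by rewrite mulf_eq0 (negbTE b0) (negbTE c0).
  apply.
  have -> : (b * c)^-1 = (b^-1 + c^-1) * (b + c)^-1 by field; rewrite b0 c0 bc0.
  by apply: MM => //; apply: recip_sumsD; exact: RAinv.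
Qed.

Lemma maximal_ideal_inv a : A a -> a != 0 -> ~ recip_sums A a -> M a^-1.
Proof.
(* Otherwise 1 = m + r/a with m in M; dropping the reciprocals of r that lie in
   M leaves 1 - \sum 1/(ad) in M with every ad in [inv_outside].  Writing that
   sum as q/p, p = q is forced (else 1/p is in M), so \sum 1/d = a is in R(A). *)
move=> Aa a0 nRa; apply: contrapT => nMa.
have [[_ M0 MD MM] _ Mmax] := maxM.
have Mprime := maximal_ideal_prime maxM.
have [m [_ [Mm [s [As ->] E]]]] := Mmax _ (recip_sums_inv Aa a0) nMa.
pose inM d := `[< M d^-1 >].
have M2 : M (\sum_(d <- s | inM d) d^-1).
  by rewrite big_seq_cond; apply: big_ind => // d /andP[_ /asboolP].
have Mw : M (1 - \sum_(d <- s | ~~ inM d) (a * d)^-1).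
  have -> : 1 - \sum_(d <- s | ~~ inM d) (a * d)^-1 = m + a^-1 * \sum_(d <- s | inM d) d^-1.
    have -> : \sum_(d <- s | ~~ inM d) (a * d)^-1 = a^-1 * \sum_(d <- s | ~~ inM d) d^-1.
      by rewrite mulr_sumr; apply: eq_bigr => d _; rewrite invfM.
    by rewrite -E (bigID inM) /=; ring.
  by apply: MD => //; apply: MM => //; exact: recip_sums_inv.
have Bs b : b \in [seq a * d | d <- s & ~~ inM d] -> inv_outside b /\ b != 0.
  case/mapP => d; rewrite mem_filter => /andP[/asboolPn nMd ds] ->.
  have [Ad d0] := As d ds; split; last exact: mulf_neq0.
  split; first exact: (subringM subA).
  by right; rewrite invfM => /Mprime [] //; exact: recip_sums_inv.
have [q [p [Bq Bp p0 Eqp]]] := sum_inv_fraction inv_outside_semiring_closed Bs.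
rewrite big_map big_filter in Eqp; rewrite Eqp in Mw.
have qp : q = p.
  apply/eqP; rewrite eq_sym -subr_eq0; apply/negPn/negP => pq0.
  have [Ap [/eqP|]] := Bp; first by rewrite (negbTE p0).
  apply; have -> : p^-1 = (p - q)^-1 * (1 - q / p) by field; rewrite p0 pq0.
  by apply: MM => //; apply: recip_sums_inv => //; apply: (subringB subA) => //; case: Bq.
apply: nRa; exists [seq d <- s | ~~ inM d]; split.
  by move=> d; rewrite mem_filter => /andP[_ /As].
apply: (mulfI (invr_neq0 a0)); rewrite mulVf // big_filter mulr_sumr.
by rewrite -[LHS](divff p0) -{1}qp -Eqp; apply: eq_bigr => d _; rewrite invfM.
Qed.

End MaximalIdeal.

Lemma recip_sums_local : is_local (recip_sums A).
Proof.
(* Split x = q/p + y, where y collects the 1/d with d outside R(A): y is in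
   every maximal ideal and q/p is 0 or a unit, so x and 1 - x cannot both lie
   in maximal ideals. *)
move=> x Rx; apply: contrapT => /not_orP [nux nu1x].
have [M1 maxM1 M1x] := exists_maximal_ideal subRA Rx nux.
have R1x := subringB subRA (subring1 subRA) Rx.
have [M2 maxM2 M2x] := exists_maximal_ideal subRA R1x nu1x.
have [s [As Ex]] := Rx.
pose inR d := `[< recip_sums A d >].
pose y := \sum_(d <- s | ~~ inR d) d^-1.
have My M : is_maximal_ideal (recip_sums A) M -> M y.
  move=> maxM; have [[_ M0 MD _] _ _] := maxM.
  rewrite /y big_seq_cond; apply: big_ind => // d /andP [ds /asboolPn nRd].
  by have [Ad d0] := As d ds; exact: maximal_ideal_inv.
pose B d := A d /\ recip_sums A d.
have B_closed : is_semiring_closed B.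
  split; first by split; [exact: (subring0 subA) | exact: recip_sums0].
  - by split; [exact: (subring1 subA) | exact: (subring1 subRA)].
  - by move=> u v [Au Ru] [Av Rv]; split; [exact: (subringD subA) | exact: recip_sumsD].
  - by move=> u v [Au Ru] [Av Rv]; split; [exact: (subringM subA) | exact: recip_sumsM].
have Bs d : d \in [seq d <- s | inR d] -> B d /\ d != 0.
  by rewrite mem_filter => /andP [/asboolP Rd /As [Ad d0]].
have [q [p [[Aq _] [_ Rp] p0 Eqp]]] := sum_inv_fraction B_closed Bs.
rewrite big_filter in Eqp.
have Exy : x = q / p + y by rewrite Ex (bigID inR) Eqp.
have [q0|q0] := eqVneq q 0.
  have [[_ _ M2D _] M21 _] := maxM2; apply: M21.
  have -> : 1 = (1 - x) + y by rewrite Exy q0 mul0r add0r; ring.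
  by apply: M2D => //; exact: My.
have [[_ _ M1D M1M] M11 _] := maxM1; apply: M11.
have M1u : M1 (x + (-1) * y).
  apply: M1D => //; apply: M1M; last exact: My.
  exact: (subringN subRA (subring1 subRA)).
have -> : 1 = p / q * (x + (-1) * y) by rewrite Exy; field; rewrite q0 p0.
by apply: M1M M1u; apply: recip_sumsM => //; exact: recip_sums_inv.
Qed.

End RecipSums.

Definition pow_fractions (F : fieldType) (A : F -> Prop) (a x : F) : Prop :=
  exists d k, A d /\ x = d / a ^+ k.

Section PowFractions.
Variables (F : fieldType) (A : F -> Prop) (a : F).
Hypotheses (subA : is_subring A) (Aa : A a) (a_neq0 : a != 0).

Lemma pow_fractions_subring : is_subring (pow_fractions A a).
Proof.
have apow_neq0 k : a ^+ k != 0 by exact: expf_neq0.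
split.
- by exists 0, 0%N; split; [exact: (subring0 subA) | rewrite mul0r].
- by exists 1, 0%N; split; [exact: (subring1 subA) | rewrite expr0 divr1].
- move=> _ _ [d [k [Ad ->]]] [e [l [Ae ->]]].
  exists (d * a ^+ l - e * a ^+ k), (k + l)%N; split.
    by apply: (subringB subA); apply: (subringM subA) => //; exact: (subringX subA).
  by rewrite exprD; field; rewrite !apow_neq0.
- move=> _ _ [d [k [Ad ->]]] [e [l [Ae ->]]].
  exists (d * e), (k + l)%N; split; first exact: (subringM subA).
  by rewrite exprD; field; rewrite !apow_neq0.
Qed.

Lemma recip_sums_pow_fractions :
  recip_sums (pow_fractions A a) = adjoin_pow (recip_sums A) a.
Proof.
have subRA := recip_sums_subring subA.
have subRAa := recip_sums_subring pow_fractions_subring.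
have Ra_inv : recip_sums A a^-1 by exact: recip_sums_inv.
apply/funext => x; apply/propext; split; last first.
  move=> [r [m [Rr ->]]]; apply: (subringM subRAa); last apply: (subringX subRAa).
    by apply: (recip_sums_mono _ Rr) => d Ad; exists d, 0%N; rewrite expr0 divr1.
  rewrite -[X in recip_sums _ X]invrK; apply: recip_sums_inv; last by rewrite invr_neq0.
  by exists 1, 1%N; split; [exact: (subring1 subA) | rewrite expr1 mul1r].
move=> [s [As ->]]; elim: s As => [|b s IHs] As.
  by exists 0, 0%N; split; [exact: recip_sums0 | rewrite big_nil mul0r].
have [[d [k [Ad Eb]]] b0] : pow_fractions A a b /\ b != 0 by apply: As; rewrite inE eqxx.
have [r [m [Rr Er]]] : adjoin_pow (recip_sums A) a (\sum_(c <- s) c^-1).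
  by apply: IHs => c cs; apply: As; rewrite inE cs orbT.
have d0 : d != 0 by apply: contraNneq b0; rewrite Eb => ->; rewrite mul0r.
exists (d^-1 * a^-1 ^+ m + r * a^-1 ^+ k), (k + m)%N; split.
  have RXa n : recip_sums A (a^-1 ^+ n) by exact: (subringX subRA).
  by apply: (subringD subRA); apply: (subringM subRA) => //; apply: recip_sums_inv.
rewrite big_cons Er Eb !exprVn exprD; field.
by rewrite d0 !expf_neq0.
Qed.

Lemma recip_sums_adjoin_local : is_local (adjoin_pow (recip_sums A) a).
Proof. rewrite -recip_sums_pow_fractions; exact: recip_sums_local pow_fractions_subring. Qed.

End PowFractions.

Definition frac_image (D : idomainType) (x : {fraction D}) : Prop :=
  exists d, x = frac_emb d.

Section ReciprocalComplement.
Variable D : idomainType.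

Lemma frac_emb_eq0 (d : D) : (frac_emb d == 0) = (d == 0).
Proof. exact: tofrac_eq0. Qed.

Lemma frac_image_subring : is_subring (@frac_image D).
Proof.
rewrite /frac_image /frac_emb; split.
- by exists 0; rewrite tofrac0.
- by exists 1; rewrite tofrac1.
- by move=> _ _ [d ->] [e ->]; exists (d - e); rewrite tofracB.
- by move=> _ _ [d ->] [e ->]; exists (d * e); rewrite tofracM.
Qed.

Lemma recip_complE : @recip_compl D = recip_sums (@frac_image D).
Proof.
apply/funext => x; apply/propext; split.
  apply; first exact: recip_sums_subring frac_image_subring.
  by move=> d d0; apply: recip_sums_inv; [exists d | rewrite frac_emb_eq0].
move=> [s [As ->]] S subS Sinv; rewrite big_seq.
apply: big_ind; [exact: subring0 | exact: subringD |].
by move=> _ /As [[d ->]]; rewrite frac_emb_eq0; exact: Sinv.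
Qed.

Lemma recip_compl_subring : is_subring (@recip_compl D).
Proof. rewrite recip_complE; exact: recip_sums_subring frac_image_subring. Qed.

Lemma recip_compl_inv (d : D) : d != 0 -> @recip_compl D (frac_emb d)^-1.
Proof.
by move=> d0; rewrite recip_complE; apply: recip_sums_inv; [exists d | rewrite frac_emb_eq0].
Qed.

Lemma p_idealE (f : D) : f != 0 ->
  forall x, p_ideal f x <-> nondivisors_pow (@recip_compl D) (frac_emb f)^-1 x.
Proof.
move=> f0; have Af : frac_image (frac_emb f) by exists f.
have Ff0 : frac_emb f != 0 by rewrite frac_emb_eq0.
have local_f := recip_sums_adjoin_local frac_image_subring Af Ff0.
have subR := recip_sums_subring frac_image_subring.
have Rf_inv : recip_sums (@frac_image D) (frac_emb f)^-1 by apply: recip_sums_inv.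
have Pmax := nondivisors_pow_max_prime_avoiding subR Ff0 Rf_inv local_f.
rewrite /p_ideal recip_complE.
apply: (max_prime_avoiding_nondivisors_pow subR Ff0 Rf_inv local_f).
exact: epsilon_spec (ex_intro _ _ Pmax).
Qed.

End ReciprocalComplement.

Theorem mainTheorem10 (D : idomainType) (f g : D) :
  f != 0 -> g != 0 ->
  ((forall x, p_ideal g x -> p_ideal f x) <->
   (forall x, radical (@recip_compl D) (principal_ideal (@recip_compl D) (frac_emb g)^-1) x ->
              radical (@recip_compl D) (principal_ideal (@recip_compl D) (frac_emb f)^-1) x)) /\
  ((forall x, radical (@recip_compl D) (principal_ideal (@recip_compl D) (frac_emb g)^-1) x ->
              radical (@recip_compl D) (principal_ideal (@recip_compl D) (frac_emb f)^-1) x) <->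
   (exists e : nat, (1 <= e)%N /\
      principal_ideal (@recip_compl D) (frac_emb f)^-1 ((frac_emb g ^+ e)^-1))).
Proof.
move=> f0 g0.
have subR := @recip_compl_subring D.
have Rf := recip_compl_inv f0; have Rg := recip_compl_inv g0.
have p_ideal_sub : (forall x, p_ideal g x -> p_ideal f x) <->
    (forall x, nondivisors_pow (@recip_compl D) (frac_emb g)^-1 x ->
               nondivisors_pow (@recip_compl D) (frac_emb f)^-1 x).
  by split => sub x /(p_idealE g0) /sub /(p_idealE f0).
have nondiv_sub := nondivisors_pow_subset subR Rf Rg.
have rad_sub := radical_principal_subset subR Rf Rg.
setoid_rewrite exprVn in nondiv_sub; setoid_rewrite exprVn in rad_sub.
by rewrite p_ideal_sub nondiv_sub rad_sub.
Qed.
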